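(* Let $n\ge 1$, let $G$ be a subgroup of the symmetric group $S_n$ acting on $T=\{1,\ldots,n\}$, and let $\mathcal{B}$ be a block partition for $G$. Then the map $\Psi\mapsto \Psi|_T$ is a group isomorphism from the automorphism group $\mathrm{Aut}(U_{G\looparrowright\mathcal{B}})$ of the ordered set $U_{G\looparrowright\mathcal{B}}$ onto $G$. In particular, every automorphism of $U_{G\looparrowright\mathcal{B}}$ maps $T$ onto $T$, its restriction to $T$ is an element of $G$, every element of $G$ arises as such a restriction, and an automorphism is uniquely determined by its restriction to $T$.
   Context: A block of a permutation group $G$ on $\{1,\ldots,n\}$ is a set $B\subseteq\{1,\ldots,n\}$ such that for all $\Phi\in G$, $\Phi[B]\cap B\neq\emptyset$ implies $\Phi[B]=B$. For $A\subseteq\{1,\ldots,n\}$ write $G\cdot A=\{\sigma[A]:\sigma\in G\}$. Let $O_1,\ldots,O_\ell$ be the orbits of $G$ on $\{1,\ldots,n\}$, and for each $j$ let $B_j\subseteq O_j$ be a (nonempty) block of $G$. The partition $\mathcal{B}=\bigcup_{j=1}^\ell G\cdot B_j$ of $\{1,\ldots,n\}$ is called a block partition with orbit cut $\{B_1,\ldots,B_\ell\}$. For $B\in\mathcal{B}$ let $G|_B=\{\theta|_B:\theta\in G\}$ (restrictions of elements of $G$ to $B$, regarded as functions with domain $B$), and let $M=\bigcup_{B\in\mathcal{B}}G|_B$. For $\mu\in M$ let $D^\mu=\mathrm{dom}(\mu)\times\{\mu\}$. The ordered set $U_{G\looparrowright\mathcal{B}}$ has as underlying set the disjoint union of $F=\{\ell_1,u_1,\ldots,\ell_n,u_n\}$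 (new symbols), $G$ (its elements as abstract points), $\bigcup_{\mu\in M}D^\mu$, and $T=\{1,\ldots,n\}$. Its order is the reflexive–transitive closure of the following strict comparabilities: (1) $\ell_1<u_1>\ell_2<u_2>\cdots>\ell_n<u_n$ (so $F$ is a fence with $2n$ elements); (2) for every $\mu\in M$ and every $j\in\mathrm{dom}(\mu)$: $u_j<(j,\mu)$ and $(j,\mu)<\mu(j)\in T$; (3) for every $\theta\in G$ and every $B\in\mathcal{B}$: $\theta<x$ for all $x\in D^{\theta|_B}$. No other comparabilities hold; in particular $G$, $\bigcup_{\mu\in M}D^\mu$ and $T$ are antichains. *)

From HB Require Import structures.
From mathcomp Require Import all_boot all_fingroup.
Set Implicit Arguments. Unset Strict Implicit. Unset Printing Implicit Defensive.

Section UG.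
Variable n : nat.
Implicit Types (G : {set {perm 'I_n}}) (Bp : {set {set 'I_n}}).

Definition pimg (g : {perm 'I_n}) (A : {set 'I_n}) : {set 'I_n} := [set g x | x in A].

Definition is_block G (B : {set 'I_n}) : bool :=
  [forall g in G, (pimg g B :&: B != set0) ==> (pimg g B == B)].

Definition orbitsG G : {set {set 'I_n}} := [set orbit 'P G x | x : 'I_n].

Definition orbit_cut G (C : {set {set 'I_n}}) : Prop :=
  (forall O, O \in orbitsG G -> #|[set B in C | B \subset O]| = 1) /\
  (forall B, B \in C ->
     [/\ B != set0, is_block G B & exists2 O, O \in orbitsG G & B \subset O]).

Definition Gdot G (A : {set 'I_n}) : {set {set 'I_n}} := [set pimg g A | g in G].

Definition block_partition G Bp : Prop :=
  exists C, orbit_cut G C /\ Bp = \bigcup_(B in C) Gdot G B.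

Definition pfun := {ffun 'I_n -> option 'I_n}.

Definition restr (g : {perm 'I_n}) (B : {set 'I_n}) : pfun :=
  [ffun x => if x \in B then Some (g x) else None].

Definition inM G Bp (mu : pfun) : bool :=
  [exists g in G, exists B in Bp, mu == restr g B].

(* Ambient carrier: F = 'I_n * bool ((i,false) = l_{i+1}, (i,true) = u_{i+1}),
   G as permutations, D-elements (j, mu), and T = 'I_n. *)
Definition V : finType :=
  ((('I_n * bool) + {perm 'I_n}) + (('I_n * pfun) + 'I_n))%type.

Definition inU G Bp (v : V) : bool :=
  match v with
  | inl (inl _) => true
  | inl (inr g) => g \in G
  | inr (inl (j, mu)) => inM G Bp mu && (mu j != None)
  | inr (inr _) => true
  end.

Definition cover Bp (v w : V) : bool :=
  match v, w with
  | inl (inl (i, false)), inl (inl (j, true)) =>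
      (i == j) || (val i == (val j).+1)          (* l_k < u_k, l_{k+1} < u_k *)
  | inl (inl (i, true)), inr (inl (j, _)) => i == j
  | inr (inl (j, mu)), inr (inr t) => mu j == Some t
  | inl (inr g), inr (inl (j, mu)) =>
      [exists B in Bp, (mu == restr g B) && (j \in B)]
  | _, _ => false
  end.

Definition Uty G Bp : finType := {v : V | inU G Bp v}.

Definition Ule G Bp (x y : Uty G Bp) : bool :=
  connect (fun a b : Uty G Bp => cover Bp (val a) (val b)) x y.

Definition inTpart (v : V) : bool := if v is inr (inr _) then true else false.

Definition tT G Bp (i : 'I_n) : Uty G Bp :=
  exist (fun v => inU G Bp v) (inr (inr i)) (erefl true).

Definition AutU_set G Bp : {set {perm Uty G Bp}} :=
  [set Psi : {perm Uty G Bp} |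
     [forall x, forall y, Ule x y == Ule (Psi x) (Psi y)]].

Lemma AutU_group_set G Bp : group_set (AutU_set G Bp).
Proof.
apply/group_setP; split.
  by rewrite inE; apply/forallP => x; apply/forallP => y; rewrite !perm1.
move=> P Q; rewrite !inE => /forallP HP /forallP HQ.
apply/forallP => x; apply/forallP => y; rewrite !permM.
move/forallP: (HP x) => /(_ y) /eqP ->.
by move/forallP: (HQ (P x)) => /(_ (P y)) /eqP ->.
Qed.

Canonical AutU G Bp : {group {perm Uty G Bp}} := Group (AutU_group_set G Bp).

End UG.

From Pilot Require Import Defs.
From HB Require Import structures.
From mathcomp Require Import all_boot all_fingroup.
Set Implicit Arguments. Unset Strict Implicit. Unset Printing Implicit Defensive.

(* U is layered into five levels: lower fence points l_i, upper
   fence points u_i, group elements, points (j, mu) of the sets D^mu, and T.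
   Each level has an order-theoretic description (T = maximal elements, D =
   elements whose strict upper bounds are all maximal, ...), so automorphisms
   preserve levels.  The fence is rigid, so every automorphism Psi fixes it;
   then a point (j, theta|_B) of D, lying above u_j and theta and below
   theta(j), forces Psi to act on G by right translation by s = Psi|_T and on
   D by post-composition with s (the blocks of B partition {0, ..., n-1}).
   Hence Psi is the automorphism induced by s, and s lies in G.  Conversely
   every s in G induces an automorphism with restriction s to T. *)

Lemma connect_homo (T T' : finType) (e : rel T) (e' : rel T') (h : T -> T') :
  {homo h : x y / e x y >-> e' x y} -> {homo h : x y / connect e x y >-> connect e' x y}.
Proof.
move=> he x y /connectP [p px ->]; apply/connectP.
by exists (map h p); [exact: homo_path px | rewrite last_map].
Qed.

Lemma forall_perm (T : finType) (s : {perm T}) (P : pred T) :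
  [forall x, P (s x)] = [forall x, P x].
Proof.
by apply/forallP/forallP => H x; [rewrite -(permKV s x); apply: H | apply: H].
Qed.

Lemma exists_perm (T : finType) (s : {perm T}) (P : pred T) :
  [exists x, P (s x)] = [exists x, P x].
Proof. by apply/negb_inj; rewrite !negb_exists (forall_perm s (fun x => ~~ P x)). Qed.

Section BlockPartition.
Variables (n : nat) (G : {group {perm 'I_n}}) (Bp : {set {set 'I_n}}).
Local Open Scope group_scope.
Hypothesis hBp : block_partition G Bp.

Lemma pimgM (g h : {perm 'I_n}) (B : {set 'I_n}) : pimg (g * h) B = pimg h (pimg g B).
Proof. by rewrite /pimg -imset_comp; apply: eq_imset => x; rewrite permM. Qed.

Lemma mem_pimg (g : {perm 'I_n}) (B : {set 'I_n}) x : (g x \in pimg g B) = (x \in B).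
Proof. by rewrite /pimg mem_imset //; exact: perm_inj. Qed.

Lemma cut_sub_orbit (C : {set {set 'I_n}}) B c :
  orbit_cut G C -> B \in C -> c \in B -> B \subset orbit 'P G c.
Proof.
case=> _ hC BC cB; have [_ _ [O /imsetP [x _ ->] BO]] := hC B BC.
by rewrite (orbit_eqP (subsetP BO c cB)).
Qed.

Lemma cut_orbit_uniq (C : {set {set 'I_n}}) B1 B2 c1 c2 :
  orbit_cut G C -> B1 \in C -> B2 \in C -> c1 \in B1 -> c2 \in B2 ->
  c2 \in orbit 'P G c1 -> B1 = B2.
Proof.
move=> cutC B1C B2C c1B1 c2B2 c12.
have Oc1 : orbit 'P G c1 \in orbitsG G by apply/imsetP; exists c1.
have /eqP/cards1P [B EB] := cutC.1 _ Oc1.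
have inB (B' : {set 'I_n}) : B' \in C -> B' \subset orbit 'P G c1 -> B' = B.
  by move=> B'C B'O; apply/set1P; rewrite -EB inE B'C.
rewrite (inB _ B1C (cut_sub_orbit cutC B1C c1B1)) (inB _ B2C) //.
by rewrite -(orbit_eqP c12); exact: cut_sub_orbit cutC B2C c2B2.
Qed.

Lemma block_partition_cover j : exists2 B, B \in Bp & j \in B.
Proof.
have [C [cutC ->]] := hBp.
have Oj : orbit 'P G j \in orbitsG G by apply/imsetP; exists j.
have /eqP/cards1P [B EB] := cutC.1 _ Oj.
have : B \in [set B in C | B \subset orbit 'P G j] by rewrite EB set11.
rewrite inE => /andP [BC BO].
have [/set0Pn [b bB] _ _] := cutC.2 B BC.
have /orbitP [g gG gj] := subsetP BO b bB.
exists (pimg g^-1 B); last by rewrite -(permK g j) mem_pimg -[g j]/(aperm j g) gj.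
by apply/bigcupP; exists B => //; apply/imsetP; exists g^-1; rewrite ?groupV.
Qed.

Lemma block_partition_disjoint B1 B2 j :
  B1 \in Bp -> B2 \in Bp -> j \in B1 -> j \in B2 -> B1 = B2.
Proof.
have [C [cutC ->]] := hBp.
move=> /bigcupP [C1 C1C /imsetP [g1 g1G ->]] /bigcupP [C2 C2C /imsetP [g2 g2G ->]].
move=> /imsetP [c1 c1C1 e1] /imsetP [c2 c2C2 e2].
have k_c1 : (g1 * g2^-1) c1 = c2 by rewrite permM -e1 e2 permK.
have kG : g1 * g2^-1 \in G by rewrite groupM ?groupV.
have eC : C1 = C2.
  by apply: (cut_orbit_uniq cutC C1C C2C c1C1 c2C2); apply/orbitP; exists (g1 * g2^-1).
subst C2; have [_ blockC _] := cutC.2 C1 C1C.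
have /eqP kC : pimg (g1 * g2^-1) C1 == C1.
  move: (forallP blockC (g1 * g2^-1)); rewrite kG /= => /implyP; apply.
  apply/set0Pn; exists c2.
  by rewrite inE -{1}k_c1 mem_pimg c1C1 c2C2.
by rewrite -{1}(mulgKV g2 g1) pimgM kC.
Qed.

End BlockPartition.

(* Adjacency in the fence: l_i < u_j iff j = i or j = i - 1. *)
Definition fence_adj n (i j : 'I_n) : bool := (i == j) || (val i == (val j).+1).

Section Levels.
Variables (n : nat) (Bp : {set {set 'I_n}}).

Definition level (v : V n) : nat :=
  match v with
  | inl (inl (_, false)) => 0
  | inl (inl (_, true)) => 1
  | inl (inr _) => 2
  | inr (inl _) => 3
  | inr (inr _) => 4
  end.

Lemma level_le4 v : level v <= 4.
Proof. by case: v => [[[i []]|g]|[[j mu]|t]]. Qed.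

(* A relation containing the generating comparabilities and closed under
   composition with them, hence containing the strict order of U.  It agrees
   with the generating comparabilities on the pairs (l, u), (u, D), (G, D) and
   (D, T), which is what makes it useful. *)
Definition above (x y : V n) : bool :=
  match x, y with
  | inl (inl (i, false)), inl (inl (j, true)) => fence_adj i j
  | inl (inl (_, false)), inr _ => true
  | inl (inl (j, true)), inr (inl (k, _)) => j == k
  | inl (inl (_, true)), inr (inr _) => true
  | inl (inr g), inr (inl (j, mu)) => Defs.cover Bp (inl (inr g)) (inr (inl (j, mu)))
  | inl (inr _), inr (inr _) => true
  | inr (inl (j, mu)), inr (inr t) => mu j == Some t
  | _, _ => false
  end.

Lemma cover_above x y : Defs.cover Bp x y -> above x y.
Proof.
by case: x => [[[i []]|g]|[[j mu]|t]]; case: y => [[[i' []]|g']|[[j' mu']|t']].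
Qed.

Lemma above_cover_trans x y z : above x y -> Defs.cover Bp y z -> above x z.
Proof.
by case: x => [[[i []]|g]|[[j mu]|t]]; case: y => [[[i' []]|g']|[[j' mu']|t']];
   case: z => [[[i'' []]|g'']|[[j'' mu'']|t'']].
Qed.

Lemma above_level x y : above x y -> [&& level x < level y, level y != 0 & level y != 2].
Proof.
by case: x => [[[i []]|g]|[[j mu]|t]]; case: y => [[[i' []]|g']|[[j' mu']|t']].
Qed.

End Levels.

Lemma fence_rigid n (a b : 'I_n -> 'I_n) : injective a -> injective b ->
  (forall i j, fence_adj (a i) (b j) = fence_adj i j) -> forall i, a i = i /\ b i = i.
Proof.
move=> ia ib adj.
have b_adj i : a i = i -> b i = i \/ val i = (val (b i)).+1.
  by move=> ai; move: (adj i i); rewrite ai /fence_adj !eqxx => /orP [/eqP|/eqP]; auto.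
move=> i; move: {2}(val i) (erefl (val i)) => k; elim: k i => [|k IH] i ik.
  have ai : a i = i.
    apply: val_inj; case: (posnP (val (a i))) => [->|a_gt0] //; exfalso.
    pose c' : 'I_n := Ordinal (leq_ltn_trans (leq_pred _) (ltn_ord (a i))).
    have [j1 bj1] := codomP (injF_onto ib (a i)).
    have [j2 bj2] := codomP (injF_onto ib c').
    have j_i j : fence_adj i j -> j = i.
      by rewrite /fence_adj ik => /orP [/eqP // | //].
    have e1 : j1 = i by apply: j_i; rewrite -adj -bj1 /fence_adj eqxx.
    have e2 : j2 = i by apply: j_i; rewrite -adj -bj2 /fence_adj /= prednK // eqxx orbT.
    have /(congr1 val) /= h : a i = c' by rewrite bj1 bj2 e1 e2.
    by move: (ltn_predL (val (a i))); rewrite a_gt0 -h ltnn.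
  by split=> //; case: (b_adj i ai) => // h; rewrite h in ik.
have k_lt : k < n by move: (ltn_ord i); rewrite ik => /ltnW.
pose i0 : 'I_n := Ordinal k_lt.
have [ai0 bi0] := IH i0 erefl.
have i_neq : i != i0 by apply/eqP => /(congr1 val); rewrite ik /= => /esym/n_Sn.
have ai : a i = i.
  move: (adj i i0); rewrite /fence_adj ik eqxx orbT bi0 => /orP [/eqP h|/eqP h].
    by case/eqP: i_neq; apply: ia; rewrite h ai0.
  by apply: val_inj; rewrite h ik.
split=> //; case: (b_adj i ai) => // h.
have bi : b i = i0 by apply: val_inj; apply/eqP; rewrite -eqSS -h ik.
by case/eqP: i_neq; apply: ib; rewrite bi bi0.
Qed.

Section InducedAutomorphisms.
Variables (n : nat) (G : {group {perm 'I_n}}) (Bp : {set {set 'I_n}}).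
Local Open Scope group_scope.

Definition postcomp (s : {perm 'I_n}) (mu : pfun n) : pfun n := [ffun x => omap s (mu x)].

Lemma postcompK s : cancel (postcomp s) (postcomp s^-1).
Proof. by move=> mu; apply/ffunP => x; rewrite !ffunE; case: (mu x) => //= y; rewrite permK. Qed.

Lemma postcomp_restr s th B : postcomp s (restr th B) = restr (th * s) B.
Proof. by apply/ffunP => x; rewrite !ffunE; case: ifP => //= _; rewrite permM. Qed.

Definition induced (s : {perm 'I_n}) (v : V n) : V n :=
  match v with
  | inl (inl p) => inl (inl p)
  | inl (inr th) => inl (inr (th * s))
  | inr (inl (j, mu)) => inr (inl (j, postcomp s mu))
  | inr (inr t) => inr (inr (s t))
  end.

Lemma inducedK s : cancel (induced s) (induced s^-1).
Proof. by case=> [[p|th]|[[j mu]|t]] /=; rewrite ?mulgK ?postcompK ?permK. Qed.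

Lemma induced_inU s v : s \in G -> inU G Bp v -> inU G Bp (induced s v).
Proof.
move=> sG; case: v => [[p|th]|[[j mu]|t]] //=; first by move=> thG; rewrite groupM.
case/andP=> /existsP [th /andP [thG /existsP [B /andP [BB /eqP ->]]]] nj.
apply/andP; split; last by rewrite ffunE; case: (restr th B j) nj.
apply/existsP; exists (th * s); rewrite groupM //=.
by apply/existsP; exists B; rewrite BB postcomp_restr eqxx.
Qed.

Lemma induced_cover s v w : Defs.cover Bp (induced s v) (induced s w) = Defs.cover Bp v w.
Proof.
case: v => [[[i []]|th]|[[j mu]|t]]; case: w => [[[i' []]|th']|[[j' mu']|t']] //=.
  apply: eq_existsb => B; congr (_ && _).
  by rewrite -postcomp_restr (can_eq (postcompK s)).
rewrite ffunE; case: (mu j) => [y|] //=.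
by rewrite !(inj_eq (@Some_inj _)) (inj_eq (@perm_inj _ s)).
Qed.

Definition induced_fun s (sG : s \in G) (x : Uty G Bp) : Uty G Bp :=
  exist (fun v => inU G Bp v) (induced s (val x)) (induced_inU sG (valP x)).

Lemma induced_fun_inj s (sG : s \in G) : injective (induced_fun sG).
Proof.
by move=> x y /(congr1 (fun z => induced s^-1 (val z))) /=; rewrite !inducedK => /val_inj.
Qed.

Definition induced_perm s (sG : s \in G) : {perm Uty G Bp} := perm (@induced_fun_inj s sG).

Lemma induced_permE s (sG : s \in G) x : val (induced_perm sG x) = induced s (val x).
Proof. by rewrite permE. Qed.

Lemma induced_perm_aut s (sG : s \in G) : induced_perm sG \in AutU G Bp.
Proof.
have hom t (tG : t \in G) : {homo induced_perm tG : x y / Ule x y}.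
  by apply: connect_homo => x y; rewrite !induced_permE induced_cover.
rewrite inE; apply/forallP => x; apply/forallP => y; apply/eqP; apply/idP/idP; first exact: hom.
have sVG : s^-1 \in G by rewrite groupV.
have back z : induced_perm sVG (induced_perm sG z) = z.
  by apply: val_inj; rewrite !induced_permE inducedK.
by move/(hom _ sVG); rewrite !back.
Qed.

End InducedAutomorphisms.

Section Automorphisms.
Variables (n : nat) (G : {group {perm 'I_n}}) (Bp : {set {set 'I_n}}).
Hypotheses (n_gt0 : 0 < n) (hBp : block_partition G Bp).

Local Notation U := (Uty G Bp).
Local Notation Aut := (AutU G Bp).
Local Notation lev x := (level (val x)).

Definition Ult (x y : U) : bool := (y != x) && Ule x y.

Lemma Ule_above (x y : U) : Ule x y -> x = y \/ above Bp (val x) (val y).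
Proof.
move=> /connectP [p pth ->]; elim/last_ind: p pth => [|p z IH]; first by left.
rewrite rcons_path last_rcons => /andP [/IH [<-|xp] c]; right; first exact: cover_above.
exact: above_cover_trans c.
Qed.

Lemma Ult_above (x y : U) : Ult x y -> above Bp (val x) (val y).
Proof. by case/andP=> ne /Ule_above [e|//]; rewrite e eqxx in ne. Qed.

Lemma Ult_level (x y : U) : Ult x y -> [&& lev x < lev y, lev y != 0 & lev y != 2].
Proof. by move/Ult_above/above_level. Qed.

Lemma cover_Ult (x y : U) : Defs.cover Bp (val x) (val y) -> Ult x y.
Proof.
move=> c; have xy : Ule x y by apply: connect1.
rewrite /Ult xy andbT; apply/eqP => yx.
by move: (above_level (cover_above c)); rewrite yx ltnn.
Qed.

Lemma Ult_aut Psi (x y : U) : Psi \in Aut -> Ult (Psi x) (Psi y) = Ult x y.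
Proof.
rewrite inE => /forallP /(_ x) /forallP /(_ y) /eqP eU.
by rewrite /Ult (inj_eq perm_inj) eU.
Qed.

(* Named points of U: the fence points l_i = fpt false i and u_i = fpt true i,
   the group element theta, and the point (j, theta|_B) of D. *)
Definition fpt (b : bool) (i : 'I_n) : U :=
  exist (fun v => inU G Bp v) (inl (inl (i, b)) : V n) (erefl true).
Definition gpt th (thG : th \in G) : U :=
  exist (fun v => inU G Bp v) (inl (inr th) : V n) thG.

Lemma dpt_proof th B j : th \in G -> B \in Bp -> j \in B ->
  inU G Bp (inr (inl (j, restr th B))).
Proof.
move=> thG BB jB; rewrite /= ffunE jB andbT.
by apply/existsP; exists th; rewrite thG; apply/existsP; exists B; rewrite BB eqxx.
Qed.

Definition dpt th B j (thG : th \in G) (BB : B \in Bp) (jB : j \in B) : U :=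
  exist (fun v => inU G Bp v) _ (dpt_proof thG BB jB).

Lemma up_nonmaximal (x : U) : lev x <= 2 -> exists2 y, Ult x y & lev y != 4.
Proof.
case: x => [[[[i []]|th]|[[j mu]|t]]] hv //= _.
- have [B BB jB] := block_partition_cover hBp i.
  by exists (dpt (group1 G) BB jB) => //; apply: cover_Ult; rewrite /= eqxx.
- by exists (fpt true i) => //; apply: cover_Ult; rewrite /= eqxx.
- have [B BB jB] := block_partition_cover hBp (Ordinal n_gt0).
  exists (dpt hv BB jB) => //; apply: cover_Ult => /=.
  by apply/existsP; exists B; rewrite BB eqxx jB.
Qed.

Lemma up_exists (x : U) : lev x != 4 -> exists y, Ult x y.
Proof.
move=> x4; case: (leqP (lev x) 2) => [/up_nonmaximal [y xy _]|]; first by exists y.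
case: x x4 => [[[[i []]|th]|[[j mu]|t]]] hv //= _ _.
case/andP: (hv) => _; case e: (mu j) => [t|] // _.
by exists (exist _ (inr (inr t) : V n) (erefl true)); apply: cover_Ult; rewrite /= e.
Qed.

Lemma down_of_top (x : U) : lev x = 1 -> exists y, Ult y x.
Proof.
case: x => [[[[i []]|th]|[[j mu]|t]]] hv //= _.
by exists (fpt false i); apply: cover_Ult; rewrite /= eqxx.
Qed.

Lemma up_of_bottom (x : U) : lev x = 0 -> exists2 y, Ult x y & lev y = 1.
Proof.
case: x => [[[[i []]|th]|[[j mu]|t]]] hv //= _.
by exists (fpt true i) => //; apply: cover_Ult; rewrite /= eqxx.
Qed.

(* Order-theoretic descriptions of the levels: T is the set of maximal
   elements, D the non-maximal elements all of whose strict upper bounds are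
   maximal, the upper fence points the remaining non-minimal elements, and the
   lower fence points the remaining elements below an upper fence point. *)
Definition maximal (x : U) : bool := [forall y, ~~ Ult x y].
Definition submaximal (x : U) : bool := ~~ maximal x && [forall y, Ult x y ==> maximal y].
Definition fence_top (x : U) : bool :=
  [&& ~~ maximal x, ~~ submaximal x & [exists y, Ult y x]].
Definition fence_bottom (x : U) : bool := ~~ fence_top x && [exists y, Ult x y && fence_top y].

Definition order_level (x : U) : nat :=
  if maximal x then 4 else if submaximal x then 3 else
  if fence_top x then 1 else if fence_bottom x then 0 else 2.

Lemma order_level_aut Psi (x : U) : Psi \in Aut -> order_level (Psi x) = order_level x.
Proof.
move=> A.
have max_aut y : maximal (Psi y) = maximal y.
  by rewrite /maximal -(forall_perm Psi); apply: eq_forallb => z; rewrite Ult_aut.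
have sub_aut y : submaximal (Psi y) = submaximal y.
  rewrite /submaximal max_aut -(forall_perm Psi); congr (_ && _).
  by apply: eq_forallb => z; rewrite Ult_aut // max_aut.
have top_aut y : fence_top (Psi y) = fence_top y.
  rewrite /fence_top max_aut sub_aut -(exists_perm Psi); congr [&& _, _ & _].
  by apply: eq_existsb => z; rewrite Ult_aut.
have bot_aut : fence_bottom (Psi x) = fence_bottom x.
  rewrite /fence_bottom top_aut -(exists_perm Psi); congr (_ && _).
  by apply: eq_existsb => z; rewrite Ult_aut // top_aut.
by rewrite /order_level max_aut sub_aut top_aut bot_aut.
Qed.

Lemma maximalE (x : U) : maximal x = (lev x == 4).
Proof.
apply/forallP/eqP => [maxx | x4 y].
  by apply/eqP; apply: contraTT (maxx x) => /up_exists [y xy]; move: (maxx y); rewrite xy.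
by apply/negP => /Ult_level; rewrite x4 ltnNge level_le4.
Qed.

Lemma submaximalE (x : U) : submaximal x = (lev x == 3).
Proof.
rewrite /submaximal maximalE; apply/idP/eqP => [/andP [x4 /forallP subx] | x3].
  case: (leqP (lev x) 2) => [/up_nonmaximal [y xy y4] | ]; last first.
    by move: x4 (level_le4 (val x)); case: (lev x) => [|[|[|[|[|]]]]].
  by move: (subx y); rewrite xy maximalE (negbTE y4).
rewrite x3; apply/forallP => y; apply/implyP => /Ult_level.
by rewrite maximalE x3 => /andP [y3 _]; rewrite eqn_leq level_le4.
Qed.

Lemma fence_topE (x : U) : fence_top x = (lev x == 1).
Proof.
rewrite /fence_top maximalE submaximalE; apply/idP/eqP => [/and3P [x4 x3 /existsP [y]] | x1].
  case/Ult_level/and3P => _ x0 x2.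
  by move: x4 x3 x0 x2 (level_le4 (val x)); case: (lev x) => [|[|[|[|[|]]]]].
by rewrite x1 /=; apply/existsP; apply: down_of_top.
Qed.

Lemma fence_bottomE (x : U) : fence_bottom x = (lev x == 0).
Proof.
rewrite /fence_bottom fence_topE; apply/idP/eqP => [/andP [x1 /existsP [y]] | x0].
  rewrite fence_topE => /andP [/Ult_level/andP [xy _] /eqP y1].
  by move: x1 xy; rewrite y1; case: (lev x).
have [y xy y1] := up_of_bottom x0.
by rewrite x0 /=; apply/existsP; exists y; rewrite xy fence_topE y1.
Qed.

Lemma order_levelE (x : U) : order_level x = lev x.
Proof.
rewrite /order_level maximalE submaximalE fence_topE fence_bottomE.
by move: (level_le4 (val x)); case: (lev x) => [|[|[|[|[|]]]]].
Qed.

Lemma level_aut Psi (x : U) : Psi \in Aut -> lev (Psi x) = lev x.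
Proof. by move=> A; rewrite -!order_levelE order_level_aut. Qed.

Lemma Ult_fence i j : Ult (fpt false i) (fpt true j) = fence_adj i j.
Proof. by apply/idP/idP => [/Ult_above | adj]; last exact: cover_Ult. Qed.

Lemma fpt_inj b : injective (fpt b).
Proof. by move=> i j /(congr1 val) [->]. Qed.

Lemma tT_inj : injective (tT G Bp).
Proof. by move=> i j /(congr1 val) [->]. Qed.

Definition fence_map (Psi : {perm U}) b i : 'I_n :=
  if val (Psi (fpt b i)) is inl (inl (j, _)) then j else i.

Lemma fence_mapE Psi b i : Psi \in Aut -> Psi (fpt b i) = fpt b (fence_map Psi b i).
Proof.
move=> A; have := level_aut (fpt b i) A; rewrite /fence_map.
by case: (Psi (fpt b i)) => [[[[j []]|?]|[[??]|?]] hv]; case: b => //= _; apply: val_inj.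
Qed.

Lemma fence_fixed Psi b i : Psi \in Aut -> Psi (fpt b i) = fpt b i.
Proof.
move=> A.
have inj b' : injective (fence_map Psi b').
  by move=> i1 i2 e; apply: (@fpt_inj b'); apply: (@perm_inj _ Psi); rewrite !fence_mapE // e.
have adj i1 j1 : fence_adj (fence_map Psi false i1) (fence_map Psi true j1) = fence_adj i1 j1.
  by rewrite -!Ult_fence -!fence_mapE // Ult_aut.
have [lfix ufix] := fence_rigid (inj false) (inj true) adj i.
by rewrite fence_mapE //; case: b; rewrite ?lfix ?ufix.
Qed.

Definition tmap (Psi : {perm U}) i : 'I_n :=
  if val (Psi (tT G Bp i)) is inr (inr t) then t else i.

Lemma tmapE Psi i : Psi \in Aut -> Psi (tT G Bp i) = tT G Bp (tmap Psi i).
Proof.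
move=> A; have := level_aut (tT G Bp i) A; rewrite /tmap.
by case: (Psi (tT G Bp i)) => [[[[? []]|?]|[[??]|t]] hv] //= _; apply: val_inj.
Qed.

(* The restriction Psi|_T as a permutation of {0, ..., n-1} (the identity when
   Psi is not an automorphism). *)
Definition restrT (Psi : {perm U}) : {perm 'I_n} :=
  insubd (1%g : {perm 'I_n}) [ffun i => tmap Psi i].

Lemma restrTE Psi : Psi \in Aut -> forall i, Psi (tT G Bp i) = tT G Bp (restrT Psi i).
Proof.
move=> A i; suff -> : restrT Psi i = tmap Psi i by exact: tmapE.
have inj : injectiveb [ffun i => tmap Psi i].
  apply/injectiveP => a b; rewrite !ffunE => e.
  by apply: tT_inj; apply: (@perm_inj _ Psi); rewrite !tmapE // e.
by rewrite -pvalE /restrT insubdK // ffunE.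
Qed.

Lemma restrT_morph : {in Aut &, {morph restrT : P Q / (P * Q)%g >-> (P * Q)%g}}.
Proof.
move=> P Q PA QA; apply/permP => i; apply: tT_inj.
by rewrite permM -!restrTE ?groupM // permM restrTE // restrTE.
Qed.

Lemma restrT_induced s (sG : s \in G) : restrT (induced_perm Bp sG) = s.
Proof.
apply/permP => i; apply: tT_inj; rewrite -restrTE ?induced_perm_aut //.
by apply: val_inj; rewrite induced_permE.
Qed.

(* The image of a point (j, theta|_B) of D: it still lies above u_j and above
   the image theta' of theta, hence has the form (j, theta'|_B'). *)
Lemma aut_dpt_shape Psi th (thG : th \in G) B (BB : B \in Bp) j (jB : j \in B) th' :
  Psi \in Aut -> val (Psi (gpt thG)) = inl (inr th') ->
  exists2 B', B' \in Bp &
    (j \in B') && (val (Psi (dpt thG BB jB)) == inr (inl (j, restr th' B'))).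
Proof.
move=> A eth.
have gd : Ult (gpt thG) (dpt thG BB jB).
  by apply: cover_Ult => /=; apply/existsP; exists B; rewrite BB eqxx jB.
have ud : Ult (fpt true j) (dpt thG BB jB) by apply: cover_Ult; rewrite /= eqxx.
rewrite -(Ult_aut _ _ A) in gd; rewrite -(Ult_aut _ _ A) fence_fixed // in ud.
have := level_aut (dpt thG BB jB) A; move: (Ult_above gd) (Ult_above ud); rewrite eth.
case: (Psi (dpt thG BB jB)) => [[[[?[]]|?]|[[j' mu']|t]] hv] //= gd' /eqP ej _; subst j'.
by case/existsP: gd' => B' /and3P [B'B /eqP -> jB']; exists B'; rewrite ?jB' ?eqxx.
Qed.

Lemma aut_gpt Psi th (thG : th \in G) : Psi \in Aut ->
  val (Psi (gpt thG)) = inl (inr (th * restrT Psi)%g).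
Proof.
move=> A; have := level_aut (gpt thG) A.
case eth: (val (Psi (gpt thG))) => [[[?[]]|th']|[[??]|?]] //= _.
congr (inl (inr _)); apply/permP => j; rewrite permM.
have [B BB jB] := block_partition_cover hBp j.
have [B' _ /andP [jB' /eqP ed]] := aut_dpt_shape BB jB A eth.
have dt : Ult (dpt thG BB jB) (tT G Bp (th j)) by apply: cover_Ult; rewrite /= ffunE jB.
rewrite -(Ult_aut _ _ A) restrTE // in dt.
by move: (Ult_above dt); rewrite ed /= ffunE jB' => /eqP [].
Qed.

(* It acts on D by post-composition with Psi|_T; disjointness of the blocks
   identifies the block B' of the image with B. *)
Lemma aut_dpt Psi th (thG : th \in G) B (BB : B \in Bp) j (jB : j \in B) : Psi \in Aut ->
  val (Psi (dpt thG BB jB)) = inr (inl (j, restr (th * restrT Psi)%g B)).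
Proof.
move=> A; have [B' B'B /andP [jB' /eqP ->]] := aut_dpt_shape BB jB A (aut_gpt thG A).
by rewrite (block_partition_disjoint hBp B'B BB jB' jB).
Qed.

(* The restriction of an automorphism to T lies in G (look at the image of 1). *)
Lemma restrT_in_G Psi : Psi \in Aut -> restrT Psi \in G.
Proof. by move=> A; move: (valP (Psi (gpt (group1 G)))); rewrite aut_gpt //= mul1g. Qed.

Lemma aut_induced Psi (x : U) : Psi \in Aut -> val (Psi x) = induced (restrT Psi) (val x).
Proof.
move=> A; case: x => [[[[i b]|th]|[[j mu]|t]] hv].
- have -> : exist (fun v => inU G Bp v) _ hv = fpt b i by apply: val_inj.
  by rewrite fence_fixed.
- exact: aut_gpt hv A.
- case/andP: (hv) => /existsP [th /andP [thG /existsP [B /andP [BB /eqP emu]]]] nj.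
  have jB : j \in B by move: nj; rewrite emu ffunE; case: ifP.
  have -> : exist (fun v => inU G Bp v) _ hv = dpt thG BB jB by apply: val_inj; rewrite /= emu.
  by rewrite aut_dpt //= postcomp_restr.
- have -> : exist (fun v => inU G Bp v) _ hv = tT G Bp t by apply: val_inj.
  by rewrite restrTE.
Qed.

End Automorphisms.

Theorem theorem2p4 (n : nat) (G : {group {perm 'I_n}}) (Bp : {set {set 'I_n}}) :
  0 < n -> block_partition G Bp ->
  (forall Psi, Psi \in AutU G Bp ->
     forall x : Uty G Bp, inTpart (val x) = inTpart (val (Psi x))) /\
  exists f : {morphism AutU G Bp >-> {perm 'I_n}},
    isom (AutU G Bp) G f /\
    (forall Psi, Psi \in AutU G Bp -> forall i : 'I_n, Psi (tT G Bp i) = tT G Bp (f Psi i)).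
Proof.
move=> n_gt0 hBp; split.
  move=> Psi A x; move: (level_aut n_gt0 hBp x A).
  by case: (val x) => [[[? []]|?]|[[??]|?]]; case: (val (Psi x)) => [[[? []]|?]|[[??]|?]].
exists (Morphism (restrT_morph n_gt0 hBp)); split; last exact: restrTE.
apply/isomP; split.
  apply/injmP => P Q PA QA /= ePQ; apply/permP => x; apply: val_inj.
  by rewrite !(aut_induced n_gt0 hBp) // ePQ.
rewrite morphimEdom; apply/setP => s; apply/imsetP/idP => [[P PA ->] | sG].
  exact: restrT_in_G.
by exists (induced_perm Bp sG); rewrite ?induced_perm_aut //= (restrT_induced n_gt0 hBp).
Qed.
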